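(* Let $\ell_n=\Psi(L_n)$, $z_n=\Psi(Z_n)$, $h_n=\Psi(H_n)$. Let $r_L$, $r_Z$, $r_H$ be the largest real roots of $t^5-4t^4-t-1$, $t^7-3t^6-t^5-6t^4-7t^3-7t^2-5t-1$ and $t^7-t^6-7t^5-12t^4-6t^3-7t^2-4t-2$, respectively. Then $\lim_{n\to\infty}\ell_n^{1/n}=r_L\approx 4.01923$, $\lim_{n\to\infty}z_n^{1/n}=r_Z\approx 3.83256$ and $\lim_{n\to\infty}h_n^{1/n}=r_H\approx 3.81063$.
   Context: A matching of a graph is a set of pairwise vertex-disjoint edges; it is maximal if it is not a proper subset of another matching. $\Psi(G)$ is the number of maximal matchings of $G$. A benzenoid system is a connected plane graph without cut-vertices in which every bounded face is a hexagon, any two hexagonal faces being either disjoint or sharing exactly one edge (then they are adjacent). It is catacondensed if no vertex lies in three hexagons, and a benzenoid chain if moreover no hexagon is adjacent to three other hexagons; its length is its number of hexagons. In a chain, the two hexagons adjacent to only one other hexagon are terminal, the rest interior. An interior hexagon has exactly two vertices of degree 2; it is straight if these are non-adjacent and kinky if they are adjacent. $L_n$ is the benzenoid chain of length $n$ with all interior hexagons straight; $Z_n$ is the one with all interior hexagons kinky and successive kinks turning alternately in opposite directions; $H_n$ (helicene) is the one with all interior hexagons kinky and all kinks turning in the same direction (viewed as an abstract graph). *)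

From Stdlib Require Import Reals List Arith Bool.
Import ListNotations.

(* An edge is an (unordered, but stored in one orientation) pair of vertices. *)
Definition edge := (nat * nat)%type.

Definition edge_eqb (e f : edge) : bool :=
  Nat.eqb (fst e) (fst f) && Nat.eqb (snd e) (snd f).

Definition inE (e : edge) (M : list edge) : bool := existsb (edge_eqb e) M.

Definition disjoint_edges (e f : edge) : bool :=
  negb (Nat.eqb (fst e) (fst f) || Nat.eqb (fst e) (snd f)
        || Nat.eqb (snd e) (fst f) || Nat.eqb (snd e) (snd f)).

Fixpoint is_matching (M : list edge) : bool :=
  match M with
  | [] => true
  | e :: M' => forallb (disjoint_edges e) M' && is_matching M'
  end.

(* All sub-lists (= subsets, since the edge lists used have no duplicates). *)
Fixpoint subsets (E : list edge) : list (list edge) :=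
  match E with
  | [] => [[]]
  | e :: E' => map (cons e) (subsets E') ++ subsets E'
  end.

Definition subsetb (M M' : list edge) : bool := forallb (fun e => inE e M') M.

Definition proper_subsetb (M M' : list edge) : bool :=
  subsetb M M' && negb (subsetb M' M).

Definition is_maximal_matching (E M : list edge) : bool :=
  is_matching M &&
  forallb (fun M' => negb (is_matching M' && proper_subsetb M M')) (subsets E).

Definition Psi (E : list edge) : nat :=
  length (filter (is_maximal_matching E) (subsets E)).

(* ---------- Benzenoid chains ----------
   A hexagon is represented by its 6 vertices [b0;...;b5] in cyclic order, all hexagons
   traversed with the same orientation (so that adjacent hexagons traverse their common
   edge in opposite directions).  For the current last hexagon, b0b1 is the edge it shares
   with its predecessor.  A new hexagon is annelated on edge b_k b_(k+1), k in {2,3,4}: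
   its cycle is [b_(k+1); b_k; f; f+1; f+2; f+3] with f,...,f+3 fresh vertices.
   For an interior hexagon with shared edges b0b1 and b_k b_(k+1):
     k = 3 : the two degree-2 vertices are b2, b5 (non-adjacent)  -> straight;
     k = 2 : degree-2 vertices b4, b5 (adjacent) -> kinky, turning one way;
     k = 4 : degree-2 vertices b2, b3 (adjacent) -> kinky, turning the other way.
   (k = 1 or 5 would put a vertex in three hexagons, which is not allowed.) *)

Definition hex_step (k : nat) (st : list nat * nat * list edge) : list nat * nat * list edge :=
  let '(b, f, E) := st in
  let c := [nth (S k) b 0; nth k b 0; f; f + 1; f + 2; f + 3] in
  let newE := [(nth 1 c 0, nth 2 c 0); (nth 2 c 0, nth 3 c 0); (nth 3 c 0, nth 4 c 0);
               (nth 4 c 0, nth 5 c 0); (nth 5 c 0, nth 0 c 0)] in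
  (c, f + 4, E ++ newE).

Definition hex0 : list nat * nat * list edge :=
  ([0; 1; 2; 3; 4; 5], 6, [(0,1); (1,2); (2,3); (3,4); (4,5); (5,0)]).

(* chain_state choice m: the chain after m annelations, the i-th annelation (i = 0,1,...)
   using edge choice i of the then-last hexagon. *)
Fixpoint chain_state (choice : nat -> nat) (m : nat) : list nat * nat * list edge :=
  match m with
  | 0 => hex0
  | S m' => hex_step (choice m') (chain_state choice m')
  end.

(* Edge list of the benzenoid chain with n hexagons (n >= 1; for n = 0 this is also a
   single hexagon, irrelevant for the limits below). *)
Definition chain_edges (choice : nat -> nat) (n : nat) : list edge :=
  let '(_, _, E) := chain_state choice (pred n) in E.

(* The choice at step 0 concerns the terminal first hexagon and is immaterial up to
   isomorphism; the choice at step i >= 1 determines the shape of interior hexagon i+1. *)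
Definition L_chain (n : nat) : list edge := chain_edges (fun _ => 3) n.
Definition Z_chain (n : nat) : list edge :=
  chain_edges (fun i => if Nat.even i then 2 else 4) n.
Definition H_chain (n : nat) : list edge := chain_edges (fun _ => 2) n.

(* Polynomial evaluation from a list of coefficients, highest degree first. *)
Definition poly_eval (c : list R) (t : R) : R := fold_left (fun acc a => (acc * t + a)%R) c 0%R.

Definition largest_real_root (c : list R) (r : R) : Prop :=
  poly_eval c r = 0%R /\ forall t : R, poly_eval c t = 0%R -> (t <= r)%R.

Definition PL : list R := [1; -4; 0; 0; -1; -1]%R.
Definition PZ : list R := [1; -3; -1; -6; -7; -7; -5; -1]%R.
Definition PH : list R := [1; -1; -7; -12; -6; -7; -4; -2]%R.

Definition nth_root (x : nat) (n : nat) : R := Rpower (INR x) (/ INR n).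

From Stdlib Require Import Reals List Arith Bool Lia Lra Btauto.
Import ListNotations.

(* A matching is maximal exactly when it dominates every edge, i.e. every edge has a covered
   endpoint.  A benzenoid chain is built by gluing hexagons, each new one sharing one edge with
   the last; the five new edges meet the rest of the graph only at the two shared vertices, and
   later hexagons are glued to fresh vertices only.  Hence, counting dominating matchings
   according to which of the six vertices of the last hexagon they cover, the 64 counts evolve by
   a transfer matrix that depends only on where the next hexagon is attached, and [Psi] is a fixed
   linear form of the resulting vector.  Computing the first few vectors shows that they satisfy
   linear recurrences with nonnegative coefficients whose characteristic polynomials are the given
   ones (the zigzag chain is iterated together with its mirror image, so that one step map serves
   for all steps).  A positive sequence satisfying such a recurrence is squeezed between two
   multiples of [r ^ n], [r] the positive root of [t ^ d = sum c_e t ^ e], which is also the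
   largest real root; so the [n]-th roots converge to [r], located by the intermediate value
   theorem. *)

Definition count {A} (p : A -> bool) (l : list A) : nat := length (filter p l).

Lemma count_app {A} (p : A -> bool) l1 l2 : count p (l1 ++ l2) = count p l1 + count p l2.
Proof. unfold count; rewrite filter_app, length_app; auto. Qed.

Lemma count_map {A B} (p : B -> bool) (g : A -> B) l :
  count p (map g l) = count (fun x => p (g x)) l.
Proof. unfold count; rewrite filter_map_swap, length_map; auto. Qed.

Lemma count_flat_map {A B} (p : B -> bool) (g : A -> list B) l :
  count p (flat_map g l) = list_sum (map (fun x => count p (g x)) l).
Proof. induction l as [|x l IH]; simpl; auto; rewrite count_app, IH; auto. Qed.

Lemma count_ext_in {A} (p q : A -> bool) l :
  (forall x, In x l -> p x = q x) -> count p l = count q l.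
Proof. intros H; unfold count; f_equal; apply filter_ext_in; auto. Qed.

Lemma count_filter {A} (p q : A -> bool) l : count q (filter p l) = count (fun x => p x && q x) l.
Proof.
  unfold count; induction l as [|x l IH]; simpl; auto.
  destruct (p x); simpl; auto; destruct (q x); simpl; auto.
Qed.

Lemma count_as_sum {A} (p : A -> bool) l :
  count p l = list_sum (map (fun x => if p x then 1 else 0) l).
Proof. unfold count; induction l as [|x l IH]; simpl; auto; destruct (p x); simpl; lia. Qed.

Lemma count_false {A} (l : list A) : count (fun _ => false) l = 0.
Proof. induction l; auto. Qed.

Lemma list_sum_map_ext_in {A} (f g : A -> nat) l : (forall x, In x l -> f x = g x) ->
  list_sum (map f l) = list_sum (map g l).
Proof. intros H; f_equal; apply map_ext_in; auto. Qed.

Lemma list_sum_map_if {A} (p : A -> bool) (f : A -> nat) l :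
  list_sum (map (fun x => if p x then f x else 0) l) = list_sum (map f (filter p l)).
Proof. induction l as [|x l IH]; simpl; auto; destruct (p x); simpl; lia. Qed.

Lemma list_sum_map_add {A} (f g : A -> nat) l :
  list_sum (map (fun x => f x + g x) l) = list_sum (map f l) + list_sum (map g l).
Proof. induction l; simpl; lia. Qed.

Section Fibres.
Variables (A S : Type) (S_dec : forall x y : S, {x = y} + {x <> y}).

Definition fibre_count (f : A -> S) (s : S) (l : list A) : nat :=
  count (fun x => if S_dec (f x) s then true else false) l.

Lemma list_sum_indicator (support : list S) (h : S -> nat) a : In a support -> NoDup support ->
  list_sum (map (fun s => h s * (if S_dec a s then 1 else 0)) support) = h a.
Proof.
  induction support as [|s support IH]; simpl; [tauto|].
  intros Ha Hn; inversion Hn as [|? ? Hs Hn']; subst.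
  destruct (S_dec a s) as [-> | Has].
  - rewrite (list_sum_map_ext_in _ (fun _ => 0)).
    + rewrite map_const; clear; induction support; simpl; lia.
    + intros x Hx; destruct (S_dec s x); [subst; contradiction | lia].
  - destruct Ha as [-> | Ha]; [congruence|]; rewrite IH; auto; lia.
Qed.

Lemma list_sum_by_fibres (support : list S) (f : A -> S) (h : S -> nat) l :
  NoDup support -> (forall x, In x l -> In (f x) support) ->
  list_sum (map (fun x => h (f x)) l) =
  list_sum (map (fun s => h s * fibre_count f s l) support).
Proof.
  intros Hn; induction l as [|x l IH]; simpl; intros Hin.
  - rewrite (list_sum_map_ext_in _ (fun _ => 0)) by (intros; unfold fibre_count, count; simpl; lia).
    rewrite map_const; clear; induction support; simpl; lia.
  - rewrite IH by auto; rewrite <- (list_sum_indicator support h (f x)) by auto.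
    rewrite <- list_sum_map_add; apply list_sum_map_ext_in; intros s _.
    unfold fibre_count, count; simpl; destruct (S_dec (f x) s); simpl; lia.
Qed.
End Fibres.

Arguments fibre_count {A S}.

(** * Maximal matchings *)

Definition covered (M : list edge) (x : nat) : bool :=
  existsb (fun e => Nat.eqb x (fst e) || Nat.eqb x (snd e)) M.

Definition dominated (c : nat -> bool) (E : list edge) : bool :=
  forallb (fun e => c (fst e) || c (snd e)) E.

Lemma edge_eqb_eq e f : edge_eqb e f = true <-> e = f.
Proof.
  destruct e as [a b], f as [c d]; unfold edge_eqb; simpl.
  rewrite andb_true_iff, !Nat.eqb_eq; split; [intros [-> ->] | intros H; inversion H]; auto.
Qed.

Lemma inE_In e M : inE e M = true <-> In e M.
Proof.
  unfold inE; rewrite existsb_exists; split.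
  - intros [x [Hx He]]; apply edge_eqb_eq in He; subst; auto.
  - intros H; exists e; split; auto; apply edge_eqb_eq; auto.
Qed.

Lemma subsets_incl E M : In M (subsets E) -> incl M E.
Proof.
  revert M; induction E as [|e E IH]; simpl; intros M H.
  - destruct H as [<- | []]; intros x [].
  - apply in_app_or in H as [H | H].
    + apply in_map_iff in H as [M' [<- HM']].
      intros x [<- | Hx]; [left | right; apply (IH M')]; auto.
    + intros x Hx; right; apply (IH M); auto.
Qed.

Lemma filter_In_subsets (p : edge -> bool) E : In (filter p E) (subsets E).
Proof.
  induction E as [|e E IH]; simpl; auto.
  destruct (p e); apply in_or_app; [left; apply in_map | right]; auto.
Qed.

Lemma disjoint_edges_iff x y : disjoint_edges x y = true <->
  fst x <> fst y /\ fst x <> snd y /\ snd x <> fst y /\ snd x <> snd y.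
Proof.
  unfold disjoint_edges.
  destruct (Nat.eqb_spec (fst x) (fst y)), (Nat.eqb_spec (fst x) (snd y)),
           (Nat.eqb_spec (snd x) (fst y)), (Nat.eqb_spec (snd x) (snd y));
    simpl; split; intuition congruence.
Qed.

Lemma disjoint_edges_comm x y : disjoint_edges x y = disjoint_edges y x.
Proof. apply eq_true_iff_eq; rewrite !disjoint_edges_iff; intuition. Qed.

Lemma is_matching_pairwise M x y : is_matching M = true -> In x M -> In y M -> x <> y ->
  disjoint_edges x y = true.
Proof.
  induction M as [|e M IH]; simpl; [tauto|].
  intros H Hx Hy Hxy; apply andb_true_iff in H as [H1 H2].
  rewrite forallb_forall in H1.
  destruct Hx as [<- | Hx], Hy as [<- | Hy]; try congruence.
  - apply H1; auto.
  - rewrite disjoint_edges_comm; apply H1; auto.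
  - apply IH; auto.
Qed.

Lemma pairwise_is_matching M : NoDup M ->
  (forall x y, In x M -> In y M -> x <> y -> disjoint_edges x y = true) ->
  is_matching M = true.
Proof.
  induction M as [|e M IH]; simpl; auto.
  intros Hn H; inversion Hn; subst.
  apply andb_true_iff; split.
  - apply forallb_forall; intros y Hy; apply H; auto; intros <-; contradiction.
  - apply IH; auto.
Qed.

Lemma covered_spec M x : covered M x = true <-> exists e, In e M /\ (x = fst e \/ x = snd e).
Proof.
  unfold covered; rewrite existsb_exists; split; intros [e [He Hx]]; exists e; split; auto.
  - apply orb_true_iff in Hx; rewrite !Nat.eqb_eq in Hx; auto.
  - apply orb_true_iff; rewrite !Nat.eqb_eq; auto.
Qed.

Lemma not_covered M x : covered M x = false -> forall e, In e M -> x <> fst e /\ x <> snd e.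
Proof.
  intros H e He; split; intros Hx; apply Bool.not_true_iff_false in H; apply H;
    apply covered_spec; eauto.
Qed.

Lemma undominated_edge_extends M E e : NoDup E -> is_matching M = true -> incl M E ->
  In e E -> covered M (fst e) = false -> covered M (snd e) = false ->
  let M' := filter (fun x => inE x M || edge_eqb x e) E in
  is_matching M' = true /\ proper_subsetb M M' = true.
Proof.
  intros HE Hm HME He H1 H2 M'.
  assert (eM : ~ In e M) by (intros Hin; destruct (not_covered _ _ H1 e Hin); auto).
  assert (HM' : forall x, In x M' <-> In x M \/ x = e).
  { intros x; unfold M'; rewrite filter_In, orb_true_iff, inE_In, edge_eqb_eq.
    split; [tauto | intros [Hx | ->]; auto]. }
  unfold proper_subsetb, subsetb; rewrite andb_true_iff, negb_true_iff; repeat split.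
  - apply pairwise_is_matching; [apply NoDup_filter; auto |].
    intros x y Hx Hy Hxy; apply HM' in Hx, Hy.
    destruct Hx as [Hx | ->], Hy as [Hy | ->]; try congruence.
    + eapply is_matching_pairwise; eauto.
    + apply disjoint_edges_iff;
        destruct (not_covered _ _ H1 x Hx), (not_covered _ _ H2 x Hx); intuition.
    + apply disjoint_edges_iff;
        destruct (not_covered _ _ H1 y Hy), (not_covered _ _ H2 y Hy); intuition.
  - apply forallb_forall; intros x Hx; apply inE_In, HM'; auto.
  - apply Bool.not_true_iff_false; rewrite forallb_forall; intros Hall.
    apply eM, inE_In, Hall, HM'; auto.
Qed.

Lemma dominating_matching_is_maximal M M' E : is_matching M' = true ->
  dominated (covered M) E = true -> incl M' E -> subsetb M M' = true -> subsetb M' M = true.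
Proof.
  intros Hm' Hd HM'E Hsub; unfold subsetb in *; rewrite forallb_forall in *.
  intros e He; apply inE_In.
  unfold dominated in Hd; rewrite forallb_forall in Hd.
  assert (exists g, In g M /\ (fst e = fst g \/ fst e = snd g \/ snd e = fst g \/ snd e = snd g))
    as [g [Hg Hge]].
  { specialize (Hd e (HM'E e He)); apply orb_true_iff in Hd.
    destruct Hd as [Hd | Hd]; apply covered_spec in Hd as [g [? ?]]; exists g; intuition. }
  destruct (edge_eqb g e) eqn:Hge'.
  - apply edge_eqb_eq in Hge'; subst; auto.
  - assert (Hgne : g <> e)
      by (intros ->; apply Bool.not_true_iff_false in Hge'; apply Hge', edge_eqb_eq; auto).
    pose proof (is_matching_pairwise M' g e Hm' (proj1 (inE_In _ _) (Hsub g Hg)) He Hgne) as Hdis.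
    apply disjoint_edges_iff in Hdis; intuition congruence.
Qed.

Lemma is_maximal_matching_iff E M : NoDup E -> In M (subsets E) ->
  is_maximal_matching E M = is_matching M && dominated (covered M) E.
Proof.
  intros HE HM; pose proof (subsets_incl _ _ HM) as HME; unfold is_maximal_matching.
  destruct (is_matching M) eqn:Hm; simpl; auto.
  apply eq_true_iff_eq; split.
  - intros H; unfold dominated; apply forallb_forall; intros e He.
    destruct (covered M (fst e)) eqn:H1; auto; destruct (covered M (snd e)) eqn:H2; auto.
    destruct (undominated_edge_extends M E e HE Hm HME He H1 H2) as [Hm' Hp].
    rewrite forallb_forall in H.
    specialize (H _ (filter_In_subsets (fun x => inE x M || edge_eqb x e) E)).
    rewrite Hm', Hp in H; discriminate.
  - intros Hd; apply forallb_forall; intros M' HM'.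
    apply negb_true_iff, Bool.not_true_iff_false; intros Hc.
    apply andb_true_iff in Hc as [Hm' Hp].
    unfold proper_subsetb in Hp; apply andb_true_iff in Hp as [Hp1 Hp2].
    rewrite (dominating_matching_is_maximal M M' E Hm' Hd (subsets_incl _ _ HM') Hp1) in Hp2.
    discriminate.
Qed.

Lemma Psi_dominating_matchings E : NoDup E ->
  Psi E = count (fun M => is_matching M && dominated (covered M) E) (subsets E).
Proof.
  intros H; unfold Psi, count; f_equal; apply filter_ext_in; intros M HM.
  apply is_maximal_matching_iff; auto.
Qed.

Lemma covered_app A B x : covered (A ++ B) x = covered A x || covered B x.
Proof. apply existsb_app. Qed.

Lemma dominated_app c X Y : dominated c (X ++ Y) = dominated c X && dominated c Y.
Proof. apply forallb_app. Qed.

Lemma dominated_ext_in c d X :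
  (forall e, In e X -> c (fst e) = d (fst e) /\ c (snd e) = d (snd e)) ->
  dominated c X = dominated d X.
Proof.
  unfold dominated; induction X as [|e X IH]; simpl; intros H; auto.
  destruct (H e (or_introl eq_refl)) as [-> ->]; rewrite IH; auto.
Qed.

Lemma is_matching_app A B : is_matching (A ++ B) =
  is_matching A && is_matching B && forallb (fun a => forallb (disjoint_edges a) B) A.
Proof.
  induction A as [|a A IH]; simpl; [destruct (is_matching B); auto|].
  rewrite IH, forallb_app; btauto.
Qed.

Lemma cross_disjoint_iff A B : forallb (fun a => forallb (disjoint_edges a) B) A = true <->
  (forall x, covered A x = true -> covered B x = false).
Proof.
  rewrite forallb_forall; split.
  - intros H x Ha; apply Bool.not_true_iff_false; intros Hb.
    apply covered_spec in Ha as [a [Ha Hxa]], Hb as [e [He Hxe]].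
    specialize (H a Ha); rewrite forallb_forall in H; specialize (H e He).
    apply disjoint_edges_iff in H; intuition congruence.
  - intros H a Ha; apply forallb_forall; intros e He; apply disjoint_edges_iff.
    assert (H1 : covered B (fst a) = false) by (apply H, covered_spec; eauto).
    assert (H2 : covered B (snd a) = false) by (apply H, covered_spec; eauto).
    destruct (not_covered _ _ H1 e He), (not_covered _ _ H2 e He); intuition.
Qed.

Lemma forallb_map {A B} (p : B -> bool) (f : A -> B) l :
  forallb p (map f l) = forallb (fun x => p (f x)) l.
Proof. induction l as [|x l IH]; simpl; auto; rewrite IH; auto. Qed.

Definition emap (g : nat -> nat) (e : edge) : edge := (g (fst e), g (snd e)).

Lemma subsets_map g E : subsets (map (emap g) E) = map (map (emap g)) (subsets E).
Proof. induction E as [|e E IH]; simpl; auto; rewrite IH, map_app, !map_map; auto. Qed.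

Section Relabel.
Variables (g : nat -> nat) (D : nat -> Prop).
Hypothesis g_inj : forall i j, D i -> D j -> g i = g j -> i = j.

Definition edges_in (B : list edge) : Prop := forall e, In e B -> D (fst e) /\ D (snd e).

Lemma disjoint_edges_emap x y : D (fst x) -> D (snd x) -> D (fst y) -> D (snd y) ->
  disjoint_edges (emap g x) (emap g y) = disjoint_edges x y.
Proof.
  intros; apply eq_true_iff_eq; rewrite !disjoint_edges_iff; unfold emap; simpl.
  split; intros [? [? [? ?]]]; repeat split; intro Hc; try (apply g_inj in Hc; auto); congruence.
Qed.

Lemma is_matching_emap B : edges_in B -> is_matching (map (emap g) B) = is_matching B.
Proof.
  induction B as [|e B IH]; simpl; auto; intros HB.
  rewrite IH by (intros x Hx; apply (HB x); right; exact Hx).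
  f_equal; rewrite forallb_map; apply eq_true_iff_eq; rewrite !forallb_forall; split;
    intros H x Hx; specialize (H x Hx);
    destruct (HB e (or_introl eq_refl)), (HB x (or_intror Hx));
    rewrite disjoint_edges_emap in *; auto.
Qed.

Lemma covered_emap B i : edges_in B -> D i -> covered (map (emap g) B) (g i) = covered B i.
Proof.
  intros HB Hi; apply eq_true_iff_eq; rewrite !covered_spec; split.
  - intros [e [He Hx]]; apply in_map_iff in He as [e' [<- He']].
    destruct (HB e' He'); exists e'; split; auto; unfold emap in Hx; simpl in Hx.
    destruct Hx as [Hx | Hx]; apply g_inj in Hx; auto.
  - intros [e [He Hx]]; exists (emap g e); split; [apply in_map; auto|].
    unfold emap; simpl; destruct Hx as [-> | ->]; auto.
Qed.
End Relabel.

(** * Hexagonal tails *)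

Definition new_edges (b : list nat) : list edge :=
  [(nth 1 b 0, nth 2 b 0); (nth 2 b 0, nth 3 b 0); (nth 3 b 0, nth 4 b 0);
   (nth 4 b 0, nth 5 b 0); (nth 5 b 0, nth 0 b 0)].

Definition next_hexagon (k : nat) (b : list nat) (f : nat) : list nat :=
  [nth (S k) b 0; nth k b 0; f; f + 1; f + 2; f + 3].

(* [b] is the last hexagon, whose edge [b0 b1] is shared with its predecessor (for the first
   hexagon it is the only edge in [R]); [R] holds the edges of [E] other than [new_edges b], and
   [f] is the next fresh vertex. *)
Record hex_tail (b : list nat) (f : nat) (E R : list edge) : Prop := {
  tail_length : length b = 6;
  tail_NoDup : NoDup b;
  tail_below : forall x, In x b -> x < f;
  edges_below : forall e, In e E -> fst e < f /\ snd e < f;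
  edges_split : E = R ++ new_edges b;
  rest_avoids : forall e, In e R -> ~ In (fst e) (skipn 2 b) /\ ~ In (snd e) (skipn 2 b);
  edges_NoDup : NoDup E }.

Arguments tail_length {b f E R}. Arguments tail_NoDup {b f E R}.
Arguments tail_below {b f E R}. Arguments edges_below {b f E R}.
Arguments edges_split {b f E R}. Arguments rest_avoids {b f E R}.
Arguments edges_NoDup {b f E R}.

Definition hexagon_state (M : list edge) (b : list nat) : list bool := map (covered M) b.

Definition state_dominates (s : list bool) : bool :=
  forallb (fun p => nth (fst p) s false || nth (snd p) s false)
    [(1, 2); (2, 3); (3, 4); (4, 5); (5, 0)].

(* When the hexagon [next_hexagon k b f] is glued on [b], its vertices 0 and 1 are the vertices
   [S k] and [k] of [b]; [s] is the state of a matching of the old graph on [b], [t] the state of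
   a matching of the five new edges on the new hexagon. *)
Definition glued_old_state (k : nat) (s t : list bool) : list bool :=
  map (fun i => nth i s false || (Nat.eqb i k && nth 1 t false) ||
                (Nat.eqb i (S k) && nth 0 t false)) (seq 0 6).

Definition glued_new_state (k : nat) (s t : list bool) : list bool :=
  [nth (S k) s false || nth 0 t false; nth k s false || nth 1 t false;
   nth 2 t false; nth 3 t false; nth 4 t false; nth 5 t false].

Definition compatible (k : nat) (s t : list bool) : bool :=
  negb (nth (S k) s false && nth 0 t false) && negb (nth k s false && nth 1 t false) &&
  state_dominates (glued_old_state k s t).

Lemma nth_glued_old_state k s t i : i < 6 ->
  nth i (glued_old_state k s t) false =
  nth i s false || (Nat.eqb i k && nth 1 t false) || (Nat.eqb i (S k) && nth 0 t false).
Proof. intros Hi; do 6 (destruct i as [|i]; [reflexivity|]); lia. Qed.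

Lemma length_six (b : list nat) : length b = 6 ->
  exists b0 b1 b2 b3 b4 b5, b = [b0; b1; b2; b3; b4; b5].
Proof.
  destruct b as [|b0 [|b1 [|b2 [|b3 [|b4 [|b5 [|]]]]]]]; simpl; try discriminate; eauto 7.
Qed.

Lemma dominated_new_edges c b : length b = 6 ->
  dominated c (new_edges b) = state_dominates (map c b).
Proof. intros Hb; destruct (length_six b Hb) as (?&?&?&?&?&?&->); reflexivity. Qed.

Lemma covered_new_edges B b x : length b = 6 -> incl B (new_edges b) ->
  covered B x = true -> In x b.
Proof.
  intros Hb HB Hx; apply covered_spec in Hx as [e [He Hx]]; specialize (HB e He).
  destruct (length_six b Hb) as (?&?&?&?&?&?&->).
  simpl in HB; simpl; intuition (subst; simpl in *; intuition).
Qed.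

Lemma covered_incl A E f x : incl A E -> (forall e, In e E -> fst e < f /\ snd e < f) ->
  covered A x = true -> x < f.
Proof.
  intros HA HE Hx; apply covered_spec in Hx as [e [He Hx]].
  destruct (HE e (HA e He)); lia.
Qed.

Lemma nth_eqb_NoDup (b : list nat) i j : NoDup b -> i < length b -> j < length b ->
  Nat.eqb (nth i b 0) (nth j b 0) = Nat.eqb i j.
Proof.
  intros Hb Hi Hj; apply eq_true_iff_eq; rewrite !Nat.eqb_eq; split; [|intros ->; auto].
  apply (proj1 (NoDup_nth b 0) Hb); auto.
Qed.

Lemma hex_tail_vertex_below b f E R i : hex_tail b f E R -> i < 6 -> nth i b 0 < f.
Proof. intros tail Hi; apply (tail_below tail), nth_In; rewrite (tail_length tail); auto. Qed.

Lemma hex_tail_vertex_eqb b f E R i j : hex_tail b f E R -> i < 6 -> j < 6 ->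
  Nat.eqb (nth i b 0) (nth j b 0) = Nat.eqb i j.
Proof.
  intros tail Hi Hj; apply nth_eqb_NoDup; rewrite ?(tail_length tail); auto.
  apply (tail_NoDup tail).
Qed.

Section Gluing.
Variables (b : list nat) (f : nat) (E R : list edge) (k : nat) (A B : list edge).
Hypothesis tail : hex_tail b f E R.
Hypothesis k_range : 2 <= k <= 4.
Hypothesis A_incl : incl A E.
Hypothesis B_incl : incl B (new_edges (next_hexagon k b f)).

Local Notation c := (next_hexagon k b f).
Local Notation s := (hexagon_state A b).
Local Notation t := (hexagon_state B c).

Lemma glue_A_below x : covered A x = true -> x < f.
Proof. apply covered_incl with E; auto; apply (edges_below tail). Qed.

(* Below [f], the new edges only reach the two vertices of the shared edge. *)
Lemma glue_B_below x : x < f ->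
  covered B x = (Nat.eqb x (nth (S k) b 0) && covered B (nth (S k) b 0)) ||
                (Nat.eqb x (nth k b 0) && covered B (nth k b 0)).
Proof.
  intros Hx.
  destruct (Nat.eqb_spec x (nth (S k) b 0)) as [<- | H0], (Nat.eqb_spec x (nth k b 0)) as [<- | H1];
    simpl; try (destruct (covered B x); reflexivity).
  destruct (covered B x) eqn:HBx; auto.
  apply (covered_new_edges B c) in HBx; auto; simpl in HBx; lia.
Qed.

Lemma nth_hexagon_state M i : i < 6 -> nth i (hexagon_state M b) false = covered M (nth i b 0).
Proof.
  intros Hi; unfold hexagon_state.
  rewrite nth_indep with (d' := covered M 0) by (rewrite length_map, (tail_length tail); auto).
  apply map_nth.
Qed.

Lemma glue_cross : forallb (fun a => forallb (disjoint_edges a) B) A =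
  negb (covered A (nth (S k) b 0) && covered B (nth (S k) b 0)) &&
  negb (covered A (nth k b 0) && covered B (nth k b 0)).
Proof.
  apply eq_true_iff_eq; rewrite cross_disjoint_iff, andb_true_iff, !negb_true_iff; split.
  - intros H; split; apply andb_false_iff;
      match goal with |- context [covered A ?y] =>
        destruct (covered A y) eqn:Ha; [right; apply H | left]; auto end.
  - intros [Hn0 Hn1] x Hx; rewrite (glue_B_below x (glue_A_below x Hx)).
    destruct (Nat.eqb_spec x (nth (S k) b 0)) as [E0 | _], (Nat.eqb_spec x (nth k b 0)) as [E1 | _];
      rewrite <- ?E0, <- ?E1, ?Hx in *; simpl in *; rewrite ?Hn0, ?Hn1; auto.
Qed.

Lemma glue_matching : is_matching (A ++ B) =
  is_matching A && is_matching B &&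
  negb (nth (S k) s false && nth 0 t false) && negb (nth k s false && nth 1 t false).
Proof.
  rewrite is_matching_app, glue_cross, !nth_hexagon_state by lia; simpl; btauto.
Qed.

Lemma glue_old_state : hexagon_state (A ++ B) b = glued_old_state k s t.
Proof.
  pose proof (tail_length tail) as Hlen.
  apply nth_ext with (d := false) (d' := false).
  { unfold hexagon_state, glued_old_state; rewrite !length_map, length_seq; auto. }
  intros i Hi; unfold hexagon_state at 1 in Hi; rewrite length_map, Hlen in Hi.
  rewrite nth_hexagon_state, covered_app by lia.
  rewrite (glue_B_below (nth i b 0)) by (apply (hex_tail_vertex_below b f E R); auto).
  rewrite !(hex_tail_vertex_eqb b f E R i) by (auto; lia).
  rewrite nth_glued_old_state, nth_hexagon_state by lia; simpl.
  btauto.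
Qed.

Lemma glue_new_state : hexagon_state (A ++ B) c = glued_new_state k s t.
Proof.
  assert (Hfresh : forall j, covered A (f + j) = false).
  { intros j; destruct (covered A (f + j)) eqn:H; auto; apply glue_A_below in H; lia. }
  unfold glued_new_state; rewrite !nth_hexagon_state by lia.
  unfold hexagon_state; simpl; rewrite !covered_app, !Hfresh.
  rewrite <- (Nat.add_0_r f), Hfresh; reflexivity.
Qed.

Lemma glue_rest : dominated (covered (A ++ B)) R = dominated (covered A) R.
Proof.
  assert (Hshared : forall j, 2 <= j < 6 -> In (nth j b 0) (skipn 2 b)).
  { intros j Hj; replace (nth j b 0) with (nth (j - 2) (skipn 2 b) 0)
      by (rewrite nth_skipn; f_equal; lia).
    apply nth_In; rewrite length_skipn, (tail_length tail); lia. }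
  assert (Hkeep : forall x, ~ In x (skipn 2 b) -> x < f -> covered (A ++ B) x = covered A x).
  { intros x Hx Hxf; rewrite covered_app, (glue_B_below x Hxf).
    destruct (Nat.eqb_spec x (nth (S k) b 0)) as [-> | _];
      [exfalso; apply Hx, Hshared; lia |].
    destruct (Nat.eqb_spec x (nth k b 0)) as [-> | _];
      [exfalso; apply Hx, Hshared; lia |].
    apply orb_false_r. }
  apply dominated_ext_in; intros e He.
  destruct (rest_avoids tail e He) as [H1 H2].
  assert (HeE : In e E) by (rewrite (edges_split tail); apply in_or_app; auto).
  destruct (edges_below tail e HeE); split; apply Hkeep; auto.
Qed.

Lemma glue_dominating :
  is_matching (A ++ B) && dominated (covered (A ++ B)) E =
  (is_matching A && dominated (covered A) R) && (is_matching B && compatible k s t).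
Proof.
  rewrite (edges_split tail), dominated_app, glue_rest.
  rewrite dominated_new_edges by apply (tail_length tail).
  change (map (covered (A ++ B)) b) with (hexagon_state (A ++ B) b).
  rewrite glue_old_state, glue_matching; unfold compatible; btauto.
Qed.
End Gluing.

Lemma hex_tail_step b f E R k : hex_tail b f E R -> 2 <= k <= 4 ->
  hex_tail (next_hexagon k b f) (f + 4) (E ++ new_edges (next_hexagon k b f)) E.
Proof.
  intros tail Hk.
  assert (Hc0 : nth (S k) b 0 < f) by (apply (hex_tail_vertex_below b f E R); auto; lia).
  assert (Hc1 : nth k b 0 < f) by (apply (hex_tail_vertex_below b f E R); auto; lia).
  assert (Hc01 : nth (S k) b 0 <> nth k b 0)
    by (apply Nat.eqb_neq; rewrite (hex_tail_vertex_eqb b f E R) by (auto; lia);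
        apply Nat.eqb_neq; lia).
  pose proof (edges_below tail) as HE.
  unfold next_hexagon; split; auto.
  - repeat constructor; simpl; intuition lia.
  - simpl; intuition lia.
  - intros e He; apply in_app_or in He as [He | He]; [destruct (HE e He); lia |].
    simpl in He; intuition (subst; simpl; lia).
  - intros e He; destruct (HE e He); simpl; lia.
  - apply NoDup_app; [apply (edges_NoDup tail) | |].
    + simpl; repeat constructor; simpl; intuition (try congruence);
        match goal with H : (_, _) = (_, _) |- _ => inversion H end; lia.
    + intros e He He'; destruct (HE e He); simpl in He'; intuition (subst; simpl in *; lia).
Qed.

Lemma hex_tail_first :
  hex_tail [0; 1; 2; 3; 4; 5] 6 [(0, 1); (1, 2); (2, 3); (3, 4); (4, 5); (5, 0)] [(0, 1)].
Proof.
  split; auto.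
  - repeat constructor; simpl; intuition congruence.
  - simpl; intuition lia.
  - simpl; intros e He; intuition (subst; simpl; lia).
  - simpl; intros e He; intuition (subst; simpl in *; intuition congruence).
  - repeat constructor; simpl; intuition congruence.
Qed.

(** * The transfer matrix *)

Lemma subsets_app E F : subsets (E ++ F) =
  flat_map (fun A => map (fun B => A ++ B) (subsets F)) (subsets E).
Proof.
  induction E as [|e E IH]; simpl.
  - rewrite map_id; simpl; rewrite app_nil_r; auto.
  - rewrite IH, flat_map_app; f_equal.
    rewrite !flat_map_concat_map, concat_map, !map_map; f_equal.
    apply map_ext; intros A; rewrite map_map; auto.
Qed.

Fixpoint bool_lists (n : nat) : list (list bool) :=
  match n with
  | 0 => [[]]
  | S n => map (cons true) (bool_lists n) ++ map (cons false) (bool_lists n)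
  end.

Lemma In_bool_lists n l : length l = n -> In l (bool_lists n).
Proof.
  revert l; induction n as [|n IH]; intros [|a l] Hl; simpl in *; try discriminate; auto.
  apply in_or_app; destruct a; [left | right]; apply in_map, IH; lia.
Qed.

Lemma NoDup_bool_lists n : NoDup (bool_lists n).
Proof.
  induction n as [|n IH]; simpl; [repeat constructor; simpl; tauto|].
  apply NoDup_app.
  - apply NoDup_map_NoDup_ForallPairs; auto; intros x y _ _ H; inversion H; auto.
  - apply NoDup_map_NoDup_ForallPairs; auto; intros x y _ _ H; inversion H; auto.
  - intros a H1 H2; apply in_map_iff in H1 as [x [<- _]], H2 as [y [H _]]; discriminate.
Qed.

Definition states : list (list bool) := bool_lists 6.

Lemma hexagon_state_in_states M b : length b = 6 -> In (hexagon_state M b) states.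
Proof. intros H; apply In_bool_lists; unfold hexagon_state; rewrite length_map; auto. Qed.

Definition state_eqb (s t : list bool) : bool := if list_eq_dec bool_dec s t then true else false.

Definition dominating_on (R M : list edge) : bool := is_matching M && dominated (covered M) R.

(* The five newest edges need not be dominated yet: the next hexagon may still cover their
   endpoints. *)
Definition tail_count (b : list nat) (R E : list edge) (s : list bool) : nat :=
  count (fun A => dominating_on R A && state_eqb (hexagon_state A b) s) (subsets E).

Definition base_hexagon : list nat := [0; 1; 2; 3; 4; 5].

Definition transfer (k : nat) (s s' : list bool) : nat :=
  count (fun B => is_matching B &&
                  (compatible k s (hexagon_state B base_hexagon) &&
                   state_eqb (glued_new_state k s (hexagon_state B base_hexagon)) s'))
    (subsets (new_edges base_hexagon)).

Lemma count_relabel (c : list nat) (Q : list bool -> bool) : length c = 6 -> NoDup c ->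
  count (fun B => is_matching B && Q (hexagon_state B c)) (subsets (new_edges c)) =
  count (fun B => is_matching B && Q (hexagon_state B base_hexagon))
    (subsets (new_edges base_hexagon)).
Proof.
  intros Hl Hn.
  set (g := fun i => nth i c 0).
  assert (ginj : forall i j, i < 6 -> j < 6 -> g i = g j -> i = j)
    by (intros i j Hi Hj; apply (proj1 (NoDup_nth c 0) Hn); lia).
  replace (new_edges c) with (map (emap g) (new_edges base_hexagon)) by reflexivity.
  rewrite subsets_map, count_map; apply count_ext_in; intros B HB.
  assert (HD : edges_in (fun i => i < 6) B).
  { intros e He; apply (subsets_incl _ _ HB) in He; simpl in He; intuition (subst; simpl; lia). }
  rewrite (is_matching_emap g (fun i => i < 6)) by auto.
  do 2 f_equal; destruct (length_six c Hl) as (?&?&?&?&?&?&->); unfold hexagon_state; simpl.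
  rewrite <- !(covered_emap g (fun i => i < 6) ginj B) by (auto; lia); reflexivity.
Qed.

Lemma glued_extensions_count b f E R k A s' : hex_tail b f E R -> 2 <= k <= 4 -> incl A E ->
  count (fun B => dominating_on E (A ++ B) &&
                  state_eqb (hexagon_state (A ++ B) (next_hexagon k b f)) s')
    (subsets (new_edges (next_hexagon k b f))) =
  if dominating_on R A then transfer k (hexagon_state A b) s' else 0.
Proof.
  intros tail Hk HA.
  pose proof (hex_tail_step _ _ _ _ _ tail Hk) as tail'.
  set (Q := fun t => compatible k (hexagon_state A b) t &&
                     state_eqb (glued_new_state k (hexagon_state A b) t) s').
  rewrite (count_ext_in _ (fun B => dominating_on R A &&
             (is_matching B && Q (hexagon_state B (next_hexagon k b f))))).
  - destruct (dominating_on R A); cbn [andb]; [| apply count_false].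
    apply (count_relabel _ Q); [apply (tail_length tail') | apply (tail_NoDup tail')].
  - intros B HB; unfold dominating_on, Q.
    rewrite (glue_new_state b f E R k A B), (glue_dominating b f E R k A B)
      by (auto; apply subsets_incl; auto); btauto.
Qed.

Lemma tail_count_step b f E R k s' : hex_tail b f E R -> 2 <= k <= 4 ->
  tail_count (next_hexagon k b f) E (E ++ new_edges (next_hexagon k b f)) s' =
  list_sum (map (fun s => tail_count b R E s * transfer k s s') states).
Proof.
  intros tail Hk.
  unfold tail_count at 1; rewrite subsets_app, count_flat_map.
  rewrite (list_sum_map_ext_in _
    (fun A => if dominating_on R A then transfer k (hexagon_state A b) s' else 0))
    by (intros A HA; rewrite count_map;
        apply (glued_extensions_count b f E R k A s' tail Hk), subsets_incl; auto).
  rewrite list_sum_map_if.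
  rewrite (list_sum_by_fibres _ _ (list_eq_dec bool_dec) states (fun A => hexagon_state A b)
             (fun s => transfer k s s'))
    by (apply NoDup_bool_lists || (intros; apply hexagon_state_in_states, (tail_length tail))).
  apply list_sum_map_ext_in; intros s _; unfold fibre_count; rewrite count_filter.
  unfold tail_count, state_eqb; lia.
Qed.

Definition dominating_weight (s : list bool) : nat := if state_dominates s then 1 else 0.

Lemma Psi_tail_counts b f E R : hex_tail b f E R ->
  Psi E = list_sum (map (fun s => dominating_weight s * tail_count b R E s) states).
Proof.
  intros tail; rewrite Psi_dominating_matchings by apply (edges_NoDup tail).
  rewrite (count_ext_in _ (fun A => dominating_on R A && state_dominates (hexagon_state A b))).
  2:{ intros A _; rewrite (edges_split tail); unfold dominating_on.
      rewrite dominated_app, dominated_new_edges by apply (tail_length tail).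
      unfold hexagon_state; btauto. }
  rewrite <- count_filter, count_as_sum.
  rewrite (list_sum_by_fibres _ _ (list_eq_dec bool_dec) states (fun A => hexagon_state A b)
             dominating_weight)
    by (apply NoDup_bool_lists || (intros; apply hexagon_state_in_states, (tail_length tail))).
  apply list_sum_map_ext_in; intros s _; unfold fibre_count; rewrite count_filter.
  unfold tail_count, state_eqb; lia.
Qed.

Fixpoint dot (r v : list nat) : nat :=
  match r, v with
  | a :: r', x :: v' => a * x + dot r' v'
  | _, _ => 0
  end.

(* Padding the shorter argument makes addition linear for [dot] without length conditions. *)
Fixpoint vadd (x y : list nat) : list nat :=
  match x, y with
  | a :: x', b :: y' => (a + b) :: vadd x' y'
  | [], _ => y
  | _, [] => x
  end.

Definition vscale (a : nat) (x : list nat) : list nat := map (Nat.mul a) x.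

Definition mat_apply (M : list (list nat)) (v : list nat) : list nat :=
  map (fun row => dot row v) M.

Lemma dot_vadd r x y : dot r (vadd x y) = dot r x + dot r y.
Proof.
  revert x y; induction r as [|a r IH]; intros [|b x] [|c y]; simpl; rewrite ?IH; lia.
Qed.

Lemma dot_vscale r a x : dot r (vscale a x) = a * dot r x.
Proof. revert x; induction r as [|b r IH]; intros [|c x]; simpl; rewrite ?IH; lia. Qed.

Lemma dot_map {X} (f g : X -> nat) l :
  dot (map f l) (map g l) = list_sum (map (fun x => f x * g x) l).
Proof. induction l as [|x l IH]; simpl; auto; rewrite IH; auto. Qed.

Lemma vadd_map {X} (f g : X -> nat) l : vadd (map f l) (map g l) = map (fun x => f x + g x) l.
Proof. induction l as [|x l IH]; simpl; auto; rewrite IH; auto. Qed.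

Lemma mat_apply_vadd M x y : mat_apply M (vadd x y) = vadd (mat_apply M x) (mat_apply M y).
Proof. unfold mat_apply; rewrite vadd_map; apply map_ext; intros; apply dot_vadd. Qed.

Lemma mat_apply_vscale M a x : mat_apply M (vscale a x) = vscale a (mat_apply M x).
Proof. unfold mat_apply, vscale; rewrite map_map; apply map_ext; intros; apply dot_vscale. Qed.

Definition transfer_matrix (k : nat) : list (list nat) :=
  map (fun s' => map (fun s => transfer k s s') states) states.

Definition state_vector (b : list nat) (R E : list edge) : list nat :=
  map (tail_count b R E) states.

Definition weights : list nat := map dominating_weight states.

Lemma state_vector_step b f E R k : hex_tail b f E R -> 2 <= k <= 4 ->
  state_vector (next_hexagon k b f) E (E ++ new_edges (next_hexagon k b f)) =
  mat_apply (transfer_matrix k) (state_vector b R E).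
Proof.
  intros tail Hk; unfold state_vector at 1, mat_apply, transfer_matrix; rewrite map_map.
  apply map_ext; intros s'; unfold state_vector.
  rewrite (tail_count_step b f E R k s' tail Hk), dot_map.
  apply list_sum_map_ext_in; intros; lia.
Qed.

Lemma Psi_state_vector b f E R : hex_tail b f E R -> Psi E = dot weights (state_vector b R E).
Proof.
  intros tail; rewrite (Psi_tail_counts b f E R tail); unfold weights, state_vector.
  rewrite dot_map; auto.
Qed.

Definition chain_hexagon (choice : nat -> nat) (m : nat) : list nat :=
  fst (fst (chain_state choice m)).
Definition chain_fresh (choice : nat -> nat) (m : nat) : nat := snd (fst (chain_state choice m)).
Definition chain_all_edges (choice : nat -> nat) (m : nat) : list edge :=
  snd (chain_state choice m).

Definition chain_rest (choice : nat -> nat) (m : nat) : list edge :=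
  match m with 0 => [(0, 1)] | S m' => chain_all_edges choice m' end.

Definition chain_vector (choice : nat -> nat) (m : nat) : list nat :=
  state_vector (chain_hexagon choice m) (chain_rest choice m) (chain_all_edges choice m).

Definition first_vector : list nat := state_vector base_hexagon [(0, 1)] (snd hex0).

Lemma chain_hexagon_S choice m : chain_hexagon choice (S m) =
  next_hexagon (choice m) (chain_hexagon choice m) (chain_fresh choice m).
Proof.
  unfold chain_hexagon, chain_fresh; simpl; destruct (chain_state choice m) as [[b f] E]; auto.
Qed.

Lemma chain_fresh_S choice m : chain_fresh choice (S m) = chain_fresh choice m + 4.
Proof. unfold chain_fresh; simpl; destruct (chain_state choice m) as [[b f] E]; auto. Qed.

Lemma chain_all_edges_S choice m : chain_all_edges choice (S m) =
  chain_all_edges choice m ++ new_edges (chain_hexagon choice (S m)).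
Proof.
  rewrite chain_hexagon_S; unfold chain_all_edges, chain_hexagon, chain_fresh; simpl.
  destruct (chain_state choice m) as [[b f] E]; auto.
Qed.

Lemma chain_edges_S choice m : chain_edges choice (S m) = chain_all_edges choice m.
Proof.
  unfold chain_edges, chain_all_edges; simpl; destruct (chain_state choice m) as [[b f] E]; auto.
Qed.

Section Chain.
Variable choice : nat -> nat.
Hypothesis choice_range : forall m, 2 <= choice m <= 4.

Lemma chain_hex_tail m : hex_tail (chain_hexagon choice m) (chain_fresh choice m)
  (chain_all_edges choice m) (chain_rest choice m).
Proof.
  induction m as [|m IH]; [apply hex_tail_first|].
  rewrite chain_all_edges_S, chain_fresh_S, chain_hexagon_S.
  apply (hex_tail_step _ _ _ (chain_rest choice m)); auto.
Qed.

Lemma chain_vector_S m :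
  chain_vector choice (S m) = mat_apply (transfer_matrix (choice m)) (chain_vector choice m).
Proof.
  unfold chain_vector at 1; rewrite chain_all_edges_S, chain_hexagon_S; cbn [chain_rest].
  apply state_vector_step; auto; apply chain_hex_tail.
Qed.

Lemma Psi_chain_vector m : Psi (chain_edges choice (S m)) = dot weights (chain_vector choice m).
Proof.
  rewrite chain_edges_S; apply Psi_state_vector with (chain_fresh choice m), chain_hex_tail.
Qed.
End Chain.

Lemma chain_vector_const k m : 2 <= k <= 4 ->
  chain_vector (fun _ => k) m = Nat.iter m (mat_apply (transfer_matrix k)) first_vector.
Proof.
  intros Hk; induction m as [|m IH]; [reflexivity|].
  rewrite chain_vector_S, IH by auto; reflexivity.
Qed.

(** * Linear recurrences *)

Definition recurrence (l : list (nat * nat)) (d : nat) (a : nat -> nat) : Prop :=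
  forall m, a (m + d) = list_sum (map (fun p => fst p * a (m + snd p)) l).

Section LinearRecurrence.
Variables (V : Type) (add : V -> V -> V) (scale : nat -> V -> V) (zero : V).
Variables (F : V -> V) (phi : V -> nat).
Hypothesis scale_zero : scale 0 zero = zero.
Hypothesis F_add : forall x y, F (add x y) = add (F x) (F y).
Hypothesis F_scale : forall a x, F (scale a x) = scale a (F x).
Hypothesis phi_add : forall x y, phi (add x y) = phi x + phi y.
Hypothesis phi_scale : forall a x, phi (scale a x) = a * phi x.

Definition lincomb (l : list (nat * nat)) (w : nat -> V) : V :=
  fold_right (fun p acc => add (scale (fst p) (w (snd p))) acc) zero l.

Lemma iter_add m x y : Nat.iter m F (add x y) = add (Nat.iter m F x) (Nat.iter m F y).
Proof. induction m as [|m IH]; simpl; rewrite ?IH; auto. Qed.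

Lemma iter_scale m a x : Nat.iter m F (scale a x) = scale a (Nat.iter m F x).
Proof. induction m as [|m IH]; simpl; rewrite ?IH; auto. Qed.

Lemma phi_iter_lincomb m l w :
  phi (Nat.iter m F (lincomb l w)) =
  list_sum (map (fun p => fst p * phi (Nat.iter m F (w (snd p)))) l).
Proof.
  induction l as [|p l IH]; simpl.
  - rewrite <- scale_zero, iter_scale, phi_scale; auto.
  - rewrite iter_add, phi_add, iter_scale, phi_scale, IH; auto.
Qed.

Lemma recurrence_of_iterates v l d :
  Nat.iter d F v = lincomb l (fun j => Nat.iter j F v) ->
  recurrence l d (fun m => phi (Nat.iter m F v)).
Proof.
  intros Hd m; rewrite Nat.iter_add, Hd, phi_iter_lincomb.
  apply list_sum_map_ext_in; intros p _; rewrite <- Nat.iter_add; auto.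
Qed.
End LinearRecurrence.

Lemma recurrence_unique l d a b : (forall p, In p l -> snd p < d) ->
  recurrence l d a -> recurrence l d b -> (forall j, j < d -> a j = b j) -> forall m, a m = b m.
Proof.
  intros Hl Ha Hb H0 m; induction m as [m IH] using (well_founded_induction lt_wf).
  destruct (Nat.lt_ge_cases m d) as [Hm | Hm]; auto.
  replace m with (m - d + d) by lia; rewrite Ha, Hb.
  apply list_sum_map_ext_in; intros p Hp; rewrite IH; auto; specialize (Hl p Hp); lia.
Qed.

Definition vector_lincomb : list (nat * nat) -> (nat -> list nat) -> list nat :=
  lincomb (list nat) vadd vscale [].

Lemma recurrence_of_matrix_iterates M v l d :
  Nat.iter d (mat_apply M) v = vector_lincomb l (fun j => Nat.iter j (mat_apply M) v) ->
  recurrence l d (fun m => dot weights (Nat.iter m (mat_apply M) v)).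
Proof.
  apply recurrence_of_iterates; auto using mat_apply_vadd, mat_apply_vscale, dot_vadd, dot_vscale.
Qed.

Lemma forallb_seq_lt (p : nat -> bool) d :
  forallb p (seq 0 d) = true -> forall j, j < d -> p j = true.
Proof. rewrite forallb_forall; intros H j Hj; apply H, in_seq; lia. Qed.

Definition L_count (m : nat) : nat :=
  dot weights (Nat.iter m (mat_apply (transfer_matrix 3)) first_vector).
Definition H_count (m : nat) : nat :=
  dot weights (Nat.iter m (mat_apply (transfer_matrix 2)) first_vector).

Definition coeffs_L : list (nat * nat) := [(4, 4); (1, 1); (1, 0)].
Definition coeffs_H : list (nat * nat) := [(1, 6); (7, 5); (12, 4); (6, 3); (7, 2); (4, 1); (2, 0)].
Definition coeffs_Z : list (nat * nat) := [(3, 6); (1, 5); (6, 4); (7, 3); (7, 2); (5, 1); (1, 0)].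

(* The [let] makes [vm_compute] build each transfer matrix only once. *)
Lemma L_vectors : let F := mat_apply (transfer_matrix 3) in
  Nat.iter 5 F first_vector = vector_lincomb coeffs_L (fun j => Nat.iter j F first_vector) /\
  forallb (fun j => 1 <=? dot weights (Nat.iter j F first_vector)) (seq 0 5) = true.
Proof. vm_compute; auto. Qed.

Lemma H_vectors : let F := mat_apply (transfer_matrix 2) in
  Nat.iter 7 F first_vector = vector_lincomb coeffs_H (fun j => Nat.iter j F first_vector) /\
  forallb (fun j => 1 <=? dot weights (Nat.iter j F first_vector)) (seq 0 7) = true.
Proof. vm_compute; auto. Qed.

Lemma L_count_recurrence : recurrence coeffs_L 5 L_count.
Proof. apply recurrence_of_matrix_iterates, L_vectors. Qed.

Lemma L_count_initial j : j < 5 -> 1 <= L_count j.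
Proof. intros Hj; apply Nat.leb_le, (forallb_seq_lt _ 5 (proj2 L_vectors)); auto. Qed.

Lemma H_count_recurrence : recurrence coeffs_H 7 H_count.
Proof. apply recurrence_of_matrix_iterates, H_vectors. Qed.

Lemma H_count_initial j : j < 7 -> 1 <= H_count j.
Proof. intros Hj; apply Nat.leb_le, (forallb_seq_lt _ 7 (proj2 H_vectors)); auto. Qed.

Lemma Psi_L_chain m : Psi (L_chain (S m)) = L_count m.
Proof.
  unfold L_chain; rewrite Psi_chain_vector, chain_vector_const by lia; reflexivity.
Qed.

Lemma Psi_H_chain m : Psi (H_chain (S m)) = H_count m.
Proof.
  unfold H_chain; rewrite Psi_chain_vector, chain_vector_const by lia; reflexivity.
Qed.

Definition pair_add (x y : list nat * list nat) : list nat * list nat :=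
  (vadd (fst x) (fst y), vadd (snd x) (snd y)).
Definition pair_scale (a : nat) (x : list nat * list nat) : list nat * list nat :=
  (vscale a (fst x), vscale a (snd x)).

(* Advances the alternating chain together with its mirror image, whose kinks start on the other
   side; the pair of state vectors then evolves by one map independent of the step. *)
Definition zigzag_step (M N : list (list nat)) (x : list nat * list nat) : list nat * list nat :=
  (mat_apply M (snd x), mat_apply N (fst x)).

Definition zigzag_iterates (m : nat) : list nat * list nat :=
  Nat.iter m (zigzag_step (transfer_matrix 4) (transfer_matrix 2)) (first_vector, first_vector).

Definition Z_count (m : nat) : nat := dot weights (fst (zigzag_iterates m)).
Definition Z_mirror_count (m : nat) : nat := dot weights (snd (zigzag_iterates m)).

Lemma Z_vectors : let F := zigzag_step (transfer_matrix 4) (transfer_matrix 2) in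
  let Y j := Nat.iter j F (first_vector, first_vector) in
  Y 7 = lincomb _ pair_add pair_scale ([], []) coeffs_Z Y /\
  forallb (fun j => (1 <=? dot weights (fst (Y j))) &&
                    (dot weights (fst (Y j)) =? dot weights (snd (Y j)))) (seq 0 7) = true.
Proof. vm_compute; auto. Qed.

Lemma zigzag_recurrence (phi : list nat * list nat -> nat) :
  (forall x y, phi (pair_add x y) = phi x + phi y) ->
  (forall a x, phi (pair_scale a x) = a * phi x) ->
  recurrence coeffs_Z 7 (fun m => phi (zigzag_iterates m)).
Proof.
  intros Hadd Hscale; unfold zigzag_iterates.
  apply (recurrence_of_iterates _ pair_add pair_scale ([], [])
           (zigzag_step (transfer_matrix 4) (transfer_matrix 2)) phi eq_refl);
    [| | exact Hadd | exact Hscale | apply Z_vectors].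
  - intros x y; unfold zigzag_step, pair_add; cbn [fst snd]; rewrite !mat_apply_vadd; auto.
  - intros a x; unfold zigzag_step, pair_scale; cbn [fst snd]; rewrite !mat_apply_vscale; auto.
Qed.

Lemma Z_count_recurrence : recurrence coeffs_Z 7 Z_count.
Proof.
  apply (zigzag_recurrence (fun x => dot weights (fst x))); intros;
    unfold pair_add, pair_scale; cbn [fst snd]; auto using dot_vadd, dot_vscale.
Qed.

Lemma Z_count_initial j : j < 7 -> 1 <= Z_count j.
Proof.
  intros Hj; pose proof (forallb_seq_lt _ 7 (proj2 Z_vectors) j Hj) as H.
  apply andb_true_iff in H as [H _]; apply Nat.leb_le, H.
Qed.

Lemma Z_count_mirror m : Z_mirror_count m = Z_count m.
Proof.
  apply (recurrence_unique coeffs_Z 7).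
  - intros p Hp; simpl in Hp; intuition (subst; simpl; lia).
  - apply (zigzag_recurrence (fun x => dot weights (snd x))); intros;
      unfold pair_add, pair_scale; cbn [fst snd]; auto using dot_vadd, dot_vscale.
  - apply Z_count_recurrence.
  - intros j Hj; pose proof (forallb_seq_lt _ 7 (proj2 Z_vectors) j Hj) as H.
    apply andb_true_iff in H as [_ H]; symmetry; apply Nat.eqb_eq, H.
Qed.

Lemma chain_vector_zigzag m : chain_vector (fun i => if Nat.even i then 2 else 4) m =
  if Nat.even m then fst (zigzag_iterates m) else snd (zigzag_iterates m).
Proof.
  induction m as [|m IH]; [reflexivity|].
  rewrite chain_vector_S by (intros i; destruct (Nat.even i); lia).
  rewrite IH, Nat.even_succ, <- Nat.negb_even; destruct (Nat.even m); reflexivity.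
Qed.

Lemma Psi_Z_chain m : Psi (Z_chain (S m)) = Z_count m.
Proof.
  unfold Z_chain; rewrite Psi_chain_vector, chain_vector_zigzag
    by (intros i; destruct (Nat.even i); lia).
  destruct (Nat.even m); [reflexivity | apply Z_count_mirror].
Qed.

(** * Growth rates *)

Open Scope R_scope.

Definition sumR (l : list R) : R := fold_right Rplus 0 l.

Definition char_sum (l : list (nat * nat)) (t : R) : R :=
  sumR (map (fun p => INR (fst p) * t ^ snd p) l).

Lemma sumR_le {X} (f g : X -> R) l : (forall x, In x l -> f x <= g x) ->
  sumR (map f l) <= sumR (map g l).
Proof. induction l as [|x l IH]; simpl; intros H; [lra|]; apply Rplus_le_compat; auto. Qed.

Lemma sumR_scale {X} (f : X -> R) k l : sumR (map (fun x => k * f x) l) = k * sumR (map f l).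
Proof. induction l as [|x l IH]; simpl; [ring | rewrite IH; ring]. Qed.

Lemma INR_list_sum {X} (f : X -> nat) l :
  INR (list_sum (map f l)) = sumR (map (fun x => INR (f x)) l).
Proof. induction l as [|x l IH]; simpl; auto; rewrite plus_INR, IH; auto. Qed.

Lemma le_list_sum_map {X} (f : X -> nat) l x : In x l -> (f x <= list_sum (map f l))%nat.
Proof. induction l as [|y l IH]; simpl; [tauto | intros [-> | H]; [| specialize (IH H)]; lia]. Qed.

Lemma horner_continuous c : forall g, continuity g ->
  continuity (fun t => fold_left (fun acc a => acc * t + a) c (g t)).
Proof.
  induction c as [|a c IH]; intros g Hg; simpl; auto.
  apply (IH (fun t => g t * t + a)), continuity_plus.
  - apply continuity_mult; [auto | apply derivable_continuous, derivable_id].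
  - apply continuity_const; intros ? ?; auto.
Qed.

Lemma poly_eval_continuous c : continuity (poly_eval c).
Proof. apply (horner_continuous c (fun _ => 0)), continuity_const; intros ? ?; auto. Qed.

(* For [t = q r] with [q > 1], each term of [char_sum l t] exceeds the corresponding term of
   [char_sum l r] by at most the factor [q ^ (d - 1)], whereas [t ^ d = q ^ d * r ^ d]. *)
Lemma char_sum_lt_pow l d r t : (forall p, In p l -> (snd p < d)%nat) ->
  0 < r < t -> r ^ d = char_sum l r -> char_sum l t < t ^ d.
Proof.
  intros Hoff [Hr Hrt] Hroot.
  set (q := t / r).
  assert (Hq : 1 < q) by (unfold q; apply Rmult_lt_reg_r with r; auto; unfold Rdiv;
    rewrite Rmult_assoc, Rinv_l, Rmult_1_r; lra).
  assert (Ht : t = q * r) by (unfold q; field; lra).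
  destruct d as [|d].
  { destruct l as [|p l]; [unfold char_sum in Hroot; simpl in Hroot; lra |].
    specialize (Hoff p (or_introl eq_refl)); lia. }
  apply Rle_lt_trans with (q ^ d * r ^ S d).
  - rewrite Hroot; unfold char_sum; rewrite <- sumR_scale; apply sumR_le; intros p Hp.
    pose proof (pos_INR (fst p)); specialize (Hoff p Hp).
    rewrite Ht, Rpow_mult_distr.
    replace (q ^ d * (INR (fst p) * r ^ snd p)) with (INR (fst p) * (q ^ d * r ^ snd p)) by ring.
    apply Rmult_le_compat_l; auto; apply Rmult_le_compat_r; [apply pow_le; lra |].
    apply Rle_pow; [lra | lia].
  - assert (0 < q ^ d) by (apply pow_lt; lra).
    assert (0 < r ^ S d) by (apply pow_lt; lra).
    replace (t ^ S d) with (q * (q ^ d * r ^ S d)) by (rewrite Ht, Rpow_mult_distr; simpl; ring).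
    rewrite <- (Rmult_1_l (q ^ d * r ^ S d)) at 1.
    apply Rmult_lt_compat_r; [apply Rmult_lt_0_compat; auto | exact Hq].
Qed.

Lemma recurrence_geometric_bounds l d (a : nat -> nat) r lo hi :
  (forall p, In p l -> (snd p < d)%nat) -> recurrence l d a -> 0 < r -> r ^ d = char_sum l r ->
  (forall j, (j < d)%nat -> lo * r ^ j <= INR (a j) <= hi * r ^ j) ->
  forall m, lo * r ^ m <= INR (a m) <= hi * r ^ m.
Proof.
  intros Hoff Hrec Hr Hroot Hinit m.
  induction m as [m IH] using (well_founded_induction lt_wf).
  destruct (Nat.lt_ge_cases m d) as [Hm | Hm]; [apply Hinit; auto|].
  replace m with (m - d + d)%nat by lia.
  rewrite Hrec, INR_list_sum, pow_add, Hroot; unfold char_sum.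
  rewrite <- !Rmult_assoc, (Rmult_comm lo), (Rmult_comm hi), !Rmult_assoc, <- !sumR_scale.
  split; apply sumR_le; intros p Hp; rewrite mult_INR;
    destruct (IH (m - d + snd p)%nat) as [H1 H2]; try (specialize (Hoff p Hp); lia);
    rewrite pow_add in H1, H2; pose proof (pos_INR (fst p)).
  - replace (r ^ (m - d) * (lo * (INR (fst p) * r ^ snd p)))
      with (INR (fst p) * (lo * (r ^ (m - d) * r ^ snd p))) by ring.
    apply Rmult_le_compat_l; auto.
  - replace (r ^ (m - d) * (hi * (INR (fst p) * r ^ snd p)))
      with (INR (fst p) * (hi * (r ^ (m - d) * r ^ snd p))) by ring.
    apply Rmult_le_compat_l; auto.
Qed.

Lemma ln_le x y : 0 < x -> x <= y -> ln x <= ln y.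
Proof.
  intros Hx Hxy; destruct (Rle_lt_or_eq_dec _ _ Hxy) as [H | ->];
    [left; apply ln_increasing |]; lra.
Qed.

(* [ln (x n) / n] differs from [ln r] by at most [(|ln lo| + |ln hi|) / n]. *)
Lemma nth_root_limit (x : nat -> R) r lo hi : 0 < r -> 0 < lo -> 0 < hi ->
  (forall n, (1 <= n)%nat -> lo * r ^ n <= x n <= hi * r ^ n) ->
  Un_cv (fun n => Rpower (x n) (/ INR n)) r.
Proof.
  intros Hr Hlo Hhi Hb; unfold Rpower.
  rewrite <- (exp_ln r Hr).
  apply (continuity_seq exp (fun n => / INR n * ln (x n)));
    [apply derivable_continuous_pt, derivable_pt_exp |].
  set (M := Rabs (ln lo) + Rabs (ln hi)).
  intros eps Heps; destruct (INR_archimed eps M Heps) as [N HN].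
  exists (S N); intros n Hn; unfold Rdist.
  destruct (Hb n ltac:(lia)) as [H1 H2].
  assert (Hrn : 0 < r ^ n) by (apply pow_lt; auto).
  assert (Hxn : 0 < x n)
    by (apply Rlt_le_trans with (lo * r ^ n); [apply Rmult_lt_0_compat |]; auto).
  apply ln_le in H1; [| apply Rmult_lt_0_compat; auto].
  apply ln_le in H2; auto.
  rewrite ln_mult, ln_pow in H1, H2 by auto.
  assert (HnR : INR n > 0) by (apply lt_0_INR; lia).
  assert (HNn : INR N < INR n) by (apply lt_INR; lia).
  replace (/ INR n * ln (x n) - ln r) with ((ln (x n) - INR n * ln r) / INR n) by (field; lra).
  unfold Rdiv; rewrite Rabs_mult, Rabs_inv, (Rabs_right (INR n)) by lra.
  apply Rmult_lt_reg_r with (INR n); auto.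
  rewrite Rmult_assoc, Rinv_l, Rmult_1_r by lra.
  assert (Habs : Rabs (ln (x n) - INR n * ln r) <= M).
  { unfold M; apply Rabs_le; split;
      pose proof (Rabs_pos (ln lo)); pose proof (Rabs_pos (ln hi));
      pose proof (Rle_abs (ln hi)); pose proof (Rle_abs (- ln lo)); rewrite Rabs_Ropp in *; lra. }
  assert (0 <= INR N) by apply pos_INR.
  nra.
Qed.

Theorem growth_rate_of_recurrence (P : list R) l d (a x : nat -> nat) lo hi :
  (forall p, In p l -> (snd p < d)%nat) ->
  (forall t, poly_eval P t = t ^ d - char_sum l t) ->
  recurrence l d a -> (forall j, (j < d)%nat -> (1 <= a j)%nat) -> (forall m, x (S m) = a m) ->
  1 <= lo < hi -> poly_eval P lo < 0 -> 0 < poly_eval P hi ->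
  exists r, lo <= r <= hi /\ largest_real_root P r /\ Un_cv (fun n => nth_root (x n) n) r.
Proof.
  intros Hoff HP Hrec Hinit Hx Hlohi Hlo Hhi.
  destruct (IVT (poly_eval P) lo hi (poly_eval_continuous P) (proj2 Hlohi) Hlo Hhi)
    as [r [Hr Hr0]].
  assert (Hr1 : 1 <= r) by lra.
  assert (Hroot : r ^ d = char_sum l r) by (rewrite HP in Hr0; lra).
  exists r; split; [auto | split].
  - split; auto; intros t Ht.
    destruct (Rle_lt_dec t r) as [H | H]; auto.
    pose proof (char_sum_lt_pow l d r t Hoff ltac:(lra) Hroot); rewrite HP in Ht; lra.
  - (* On the initial window, [r ^ j / r ^ d <= 1 <= a j <= K <= K * r ^ j]. *)
    set (K := INR (S (list_sum (map a (seq 0 d))))).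
    assert (Hrd : 0 < r ^ d) by (apply pow_lt; lra).
    assert (HK : 1 <= K)
      by (unfold K; rewrite S_INR; pose proof (pos_INR (list_sum (map a (seq 0 d)))); lra).
    assert (Hbounds := recurrence_geometric_bounds l d a r (/ r ^ d) K Hoff Hrec ltac:(lra) Hroot).
    apply (nth_root_limit _ r (/ r ^ d / r) (K / r)); [lra | | |].
    + apply Rdiv_lt_0_compat; [apply Rinv_0_lt_compat |]; lra.
    + apply Rdiv_lt_0_compat; lra.
    + intros [|m] Hm; [lia |]; rewrite Hx.
      replace (/ r ^ d / r * r ^ S m) with (/ r ^ d * r ^ m) by (simpl; field; lra).
      replace (K / r * r ^ S m) with (K * r ^ m) by (simpl; field; lra).
      apply Hbounds; intros j Hj; split.
      * apply Rle_trans with 1; [| apply (le_INR 1), Hinit; auto].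
        rewrite <- (Rinv_l (r ^ d)) by lra; apply Rmult_le_compat_l;
          [left; apply Rinv_0_lt_compat; auto | apply Rle_pow; [lra | lia]].
      * apply Rle_trans with K; [| rewrite <- (Rmult_1_r K) at 1; apply Rmult_le_compat_l;
          [lra | apply pow_R1_Rle; lra]].
        unfold K; apply le_INR; apply Nat.le_le_succ_r, (le_list_sum_map a), in_seq; lia.
Qed.


Lemma growth_rate_near (P : list R) l d (a x : nat -> nat) lo hi target :
  (forall p, In p l -> (snd p < d)%nat) ->
  (forall t, poly_eval P t = t ^ d - char_sum l t) ->
  recurrence l d a -> (forall j, (j < d)%nat -> (1 <= a j)%nat) -> (forall m, x (S m) = a m) ->
  1 <= lo < hi -> poly_eval P lo < 0 -> 0 < poly_eval P hi ->
  Rabs (lo - target) < / 100000 -> Rabs (hi - target) < / 100000 ->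
  exists r, largest_real_root P r /\ Un_cv (fun n => nth_root (x n) n) r /\
            Rabs (r - target) < / 100000.
Proof.
  intros Hoff HP Hrec Hinit Hx Hlohi Hlo Hhi Hlot Hhit.
  destruct (growth_rate_of_recurrence P l d a x lo hi) as (r & Hr & Hroot & Hlim); auto.
  exists r; split; [| split]; auto.
  apply Rabs_def2 in Hlot, Hhit; apply Rabs_def1; lra.
Qed.

Ltac growth_side_goals :=
  match goal with
  | |- forall p, In p _ -> _ => intros p Hp; simpl in Hp; intuition (subst; simpl; lia)
  | |- forall t, poly_eval _ t = _ => intros t; unfold poly_eval, char_sum, sumR; simpl; ring
  | |- _ => unfold poly_eval; simpl; try (apply Rabs_def1); lra
  end.

Lemma L_growth : exists rL : R, largest_real_root PL rL /\
  Un_cv (fun n => nth_root (Psi (L_chain n)) n) rL /\ Rabs (rL - (401923 / 100000)) < / 100000.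
Proof.
  apply (growth_rate_near PL coeffs_L 5 L_count _ (4019233 / 1000000) (4019235 / 1000000));
    auto using L_count_recurrence, L_count_initial, Psi_L_chain; growth_side_goals.
Qed.

Lemma Z_growth : exists rZ : R, largest_real_root PZ rZ /\
  Un_cv (fun n => nth_root (Psi (Z_chain n)) n) rZ /\ Rabs (rZ - (383256 / 100000)) < / 100000.
Proof.
  apply (growth_rate_near PZ coeffs_Z 7 Z_count _ (3832558 / 1000000) (3832559 / 1000000));
    auto using Z_count_recurrence, Z_count_initial, Psi_Z_chain; growth_side_goals.
Qed.

Lemma H_growth : exists rH : R, largest_real_root PH rH /\
  Un_cv (fun n => nth_root (Psi (H_chain n)) n) rH /\ Rabs (rH - (381063 / 100000)) < / 100000.
Proof.
  apply (growth_rate_near PH coeffs_H 7 H_count _ (3810626 / 1000000) (3810628 / 1000000));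
    auto using H_count_recurrence, H_count_initial, Psi_H_chain; growth_side_goals.
Qed.

Theorem mainTheorem9 :
  (exists rL : R, largest_real_root PL rL /\
     Un_cv (fun n => nth_root (Psi (L_chain n)) n) rL /\ Rabs (rL - (401923 / 100000)) < / 100000) /\
  (exists rZ : R, largest_real_root PZ rZ /\
     Un_cv (fun n => nth_root (Psi (Z_chain n)) n) rZ /\ Rabs (rZ - (383256 / 100000)) < / 100000) /\
  (exists rH : R, largest_real_root PH rH /\
     Un_cv (fun n => nth_root (Psi (H_chain n)) n) rH /\ Rabs (rH - (381063 / 100000)) < / 100000).
Proof. split; [exact L_growth | split; [exact Z_growth | exact H_growth]]. Qed.
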